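(* Let $n\ge0$. If $\Lambda\in\widetilde{\mathrm{NC}}^{\mathrm B}(n)$ has $2k+1$ blocks, then $\Lambda^+\in\widetilde{\mathrm{NC}}^{\mathrm B}(n)$ and $\Lambda^+$ has $2(n-k)+1$ blocks.
   Context: A set partition of a finite set $\mathcal X\subset\mathbb Z$ is a set of nonempty pairwise disjoint sets (blocks) with union $\mathcal X$. A pair $(i,j)$ is an arc of $\Lambda$ if $i<j$ lie in the same block and $j$ is the least element of that block greater than $i$; $\mathrm{Arc}(\Lambda)$ is the set of arcs (which with $\mathcal X$ determines $\Lambda$). Let $[\pm n]=\{\pm1,\dots,\pm n\}$. $\Pi^{\mathrm B}(n)$ is the set of partitions $\Lambda$ of $\{0\}\cup[\pm n]$ such that $(i,j)\in\mathrm{Arc}(\Lambda)$ iff $(-j,-i)\in\mathrm{Arc}(\Lambda)$. $\widetilde{\mathrm{NC}}^{\mathrm B}(n)$ is the set of $\Lambda\in\Pi^{\mathrm B}(n)$ such that whenever $(i,k),(j,l)\in\mathrm{Arc}(\Lambda)$ with $i<j<k<l$, we have $(i,k)=(-l,-j)$. For a partition $\Lambda$ of $\mathcal X$, $\Lambda^+$ is the partition of $\mathcal X$ with arc set $(\mathrm{Arc}(\Lambda)\setminus\mathcal S)\cup\mathcal T$, where $\mathcal S=\{(i,i+1):i\in\mathbb Z\}$ and $\mathcal T$ is the set of pairs $(i,i+1)\in\mathcal X\times\mathcal X$ with $i$ maximal in its block of $\Lambda$ and $i+1$ minimal in its block of $\Lambda$. *)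

From mathcomp Require Import all_boot all_order all_algebra.
Set Implicit Arguments. Unset Strict Implicit. Unset Printing Implicit Defensive.
Import Order.TTheory GRing.Theory Num.Theory.

(* The ground set {0} ∪ [±n] = {-n,...,n} ⊂ Z is encoded by the finite type
   'I_(2n+1); the ordinal i stands for the integer zval i = i - n. *)
Definition pt (n : nat) := 'I_(n.*2.+1).

Definition zval {n : nat} (i : pt n) : int := (nat_of_ord i)%:Z - n%:Z.

Definition is_setpart {n : nat} (P : {set {set pt n}}) : bool :=
  partition P [set: pt n].

Definition is_arc {n : nat} (P : {set {set pt n}}) (i j : pt n) : bool :=
  [&& (zval i < zval j)%R,
      [exists B in P, (i \in B) && (j \in B)] &
      [forall B in P, forall m in B,
          (i \in B) && (zval i < zval m)%R ==> (zval j <= zval m)%R]].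

Definition PiB {n : nat} (P : {set {set pt n}}) : Prop :=
  is_setpart P /\
  forall i j : pt n, is_arc P i j <->
    (exists i' j' : pt n, zval i' = (- zval j)%R /\ zval j' = (- zval i)%R
                          /\ is_arc P i' j').

Definition NCB {n : nat} (P : {set {set pt n}}) : Prop :=
  PiB P /\
  forall i j k l : pt n,
    is_arc P i k -> is_arc P j l ->
    (zval i < zval j)%R -> (zval j < zval k)%R -> (zval k < zval l)%R ->
    zval i = (- zval l)%R /\ zval k = (- zval j)%R.

Definition is_max_in_block {n : nat} (P : {set {set pt n}}) (i : pt n) : bool :=
  [forall B in P, forall m in B, (i \in B) ==> (zval m <= zval i)%R].
Definition is_min_in_block {n : nat} (P : {set {set pt n}}) (i : pt n) : bool :=
  [forall B in P, forall m in B, (i \in B) ==> (zval i <= zval m)%R].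

(* Membership in the arc set (Arc(P) \ S) ∪ T defining P^+. *)
Definition plus_arc {n : nat} (P : {set {set pt n}}) (i j : pt n) : bool :=
  (is_arc P i j && (zval j != (zval i + 1)%R))
  || [&& zval j == (zval i + 1)%R, is_max_in_block P i & is_min_in_block P j].

From mathcomp Require Import all_boot all_order all_algebra.
From mathcomp Require Import zify.
Set Implicit Arguments. Unset Strict Implicit.

(* An arc of Λ^+ is either an arc (i, j) of Λ with j ≠ i + 1, or a pair
   (i, i + 1) with i the maximum and i + 1 the minimum of their blocks.  Such
   arcs increase and every point has at most one outgoing and one incoming
   arc, so they are the arcs of the partition into maximal chains.  The
   symmetry i ↦ -i is inherited from Λ, and Λ^+ is non-crossing because an arc
   (i, i + 1) crosses nothing.
   For the count, x is the target of an arc of Λ^+ iff x - 1 is the maximum of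
   its Λ-block: if (y, x) is an arc of Λ with y < x - 1 and x - 1 had an arc
   (x - 1, s), the arcs (y, x) and (x - 1, s) would cross, forcing
   x = -(x - 1), which has no integer solution.  Hence the targets are the
   successors of the 2k block maxima other than n, and Λ^+ has 2n + 1 - 2k
   block minima. *)

Section IntegerLabels.
Variable n : nat.
Implicit Types i j : pt n.

Lemma zval_lt i j : (zval i < zval j)%R = (i < j)%N.
Proof. by rewrite /zval; apply/idP/idP; lia. Qed.

Lemma zval_le i j : (zval i <= zval j)%R = (i <= j)%N.
Proof. by rewrite /zval; apply/idP/idP; lia. Qed.

Lemma zval_inj : injective (@zval n).
Proof. by move=> i j; rewrite /zval => E; apply: val_inj => /=; lia. Qed.

Lemma zval_succ i j : (zval j == zval i + 1)%R = (j == i.+1 :> nat).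
Proof. by rewrite /zval; apply/eqP/eqP; lia. Qed.

Lemma zval_rev i : zval (rev_ord i) = (- zval i)%R.
Proof. by rewrite /zval /=; have := ltn_ord i; lia. Qed.

Lemma rev_ord_of_zval i j : zval j = (- zval i)%R -> j = rev_ord i.
Proof. by move=> Ej; apply: zval_inj; rewrite zval_rev. Qed.

End IntegerLabels.

Lemma ordS_val m (i : 'I_m.+1) : i != ord_max -> ordS i = i.+1 :> nat.
Proof.
move=> /eqP ne; rewrite /= modn_small //; have := ltn_ord i.
by rewrite ltnS leq_eqVlt => /predU1P[E|//]; case: ne; apply: val_inj.
Qed.

Lemma card_partition_reps (T : finType) (P : {set {set T}}) (r : pred T) :
    partition P [set: T] ->
    (forall B, B \in P -> exists2 x, x \in B & r x) ->
    (forall x y, r x -> r y -> y \in pblock P x -> x = y) ->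
  #|P| = #|[set x | r x]|.
Proof.
move=> partP exr uniqr; have /and3P[/eqP covP tIP _] := partP.
have -> : P = pblock P @: [set x | r x].
  apply/setP => B; apply/idP/imsetP => [BP | [x _ ->]].
    by have [x xB rx] := exr B BP; exists x; rewrite ?inE // (def_pblock tIP BP xB).
  by rewrite pblock_mem // covP inE.
apply: card_in_imset => x y; rewrite !inE => rx ry Exy.
by apply: uniqr; rewrite // Exy mem_pblock covP inE.
Qed.

Section Blocks.
Variable n : nat.
Variable P : {set {set pt n}}.
Hypothesis partP : partition P [set: pt n].
Implicit Types i j x y : pt n.

Let tIP : trivIset P. Proof. by case/and3P: partP. Qed.

Lemma pblock_self x : x \in pblock P x.
Proof. by case/and3P: partP => /eqP covP _ _; rewrite mem_pblock covP inE. Qed.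

Lemma pblock_in x : pblock P x \in P.
Proof. by case/and3P: partP => /eqP covP _ _; rewrite pblock_mem // covP inE. Qed.

Lemma forall_blockE (p : pred (pt n)) i :
  [forall B in P, forall m in B, (i \in B) ==> p m] = [forall m in pblock P i, p m].
Proof.
apply/forall_inP/forall_inP => [H m mi | H B BP].
  by have /forall_inP/(_ m mi) := H _ (pblock_in i); rewrite pblock_self.
apply/forall_inP => m mB; apply/implyP => iB.
by apply: H; rewrite (def_pblock tIP BP iB).
Qed.

Lemma is_arcE i j : is_arc P i j =
  [&& (i < j)%N, j \in pblock P i & [forall m in pblock P i, (i < m)%N ==> (j <= m)%N]].
Proof.
have sameE : [exists B in P, (i \in B) && (j \in B)] = (j \in pblock P i).
  apply/exists_inP/idP => [[B BP /andP[iB jB]] | ji].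
    by rewrite (def_pblock tIP BP iB).
  by exists (pblock P i); rewrite ?pblock_in ?pblock_self.
rewrite /is_arc zval_lt sameE -forall_blockE.
congr [&& _, _ & _]; apply: eq_forallb => B; congr (_ ==> _).
by apply: eq_forallb => m; rewrite zval_lt zval_le; case: (i \in B).
Qed.

Lemma is_max_in_blockE i : is_max_in_block P i = [forall m in pblock P i, (m <= i)%N].
Proof.
rewrite -forall_blockE; apply: eq_forallb => B; congr (_ ==> _).
by apply: eq_forallb => m; rewrite zval_le.
Qed.

Lemma is_min_in_blockE i : is_min_in_block P i = [forall m in pblock P i, (i <= m)%N].
Proof.
rewrite -forall_blockE; apply: eq_forallb => B; congr (_ ==> _).
by apply: eq_forallb => m; rewrite zval_le.
Qed.

Lemma is_arc_functional i j j' : is_arc P i j -> is_arc P i j' -> j = j'.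
Proof.
rewrite !is_arcE => /and3P[ij j_i /forall_inP minj] /and3P[ij' j'_i /forall_inP minj'].
by apply: val_inj; apply/eqP; rewrite eqn_leq (implyP (minj _ j'_i) ij') (implyP (minj' _ j_i) ij).
Qed.

Lemma is_arc_injective i i' j : is_arc P i j -> is_arc P i' j -> i = i'.
Proof.
rewrite !is_arcE => /and3P[ij j_i /forall_inP minj] /and3P[i'j j_i' /forall_inP minj'].
have samei : pblock P i = pblock P i' by rewrite -(same_pblock tIP j_i) (same_pblock tIP j_i').
have i'_i : i' \in pblock P i by rewrite samei pblock_self.
have i_i' : i \in pblock P i' by rewrite -samei pblock_self.
have [lt|lt|//] := ltngtP i i'; last exact: val_inj.
  by have := implyP (minj i' i'_i) lt; rewrite leqNgt i'j.
by have := implyP (minj' i i_i') lt; rewrite leqNgt ij.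
Qed.

Lemma is_max_in_blockNarc i : is_max_in_block P i = ~~ [exists j, is_arc P i j].
Proof.
rewrite is_max_in_blockE; apply/forall_inP/existsPn => [maxi j | noarc m mi].
  by rewrite is_arcE; apply/negP => /and3P[ij /maxi]; rewrite leqNgt ij.
rewrite leqNgt; apply/negP => im.
have [j /andP[ji ij] jmin] := @arg_minnP _ m [pred x | (x \in pblock P i) && (i < x)] val
  ltac:(by rewrite /= mi im).
case/negP: (noarc j); rewrite is_arcE ij ji; apply/forall_inP => m' m'i.
by apply/implyP => im'; apply: jmin; rewrite /= m'i im'.
Qed.

Lemma is_min_in_blockNarc j : is_min_in_block P j = ~~ [exists i, is_arc P i j].
Proof.
rewrite is_min_in_blockE; apply/forall_inP/existsPn => [minj i | noarc m mj].
  rewrite is_arcE; apply/negP => /and3P[ij jB _].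
  by have := minj i; rewrite (same_pblock tIP jB) pblock_self leqNgt ij => /(_ isT).
rewrite leqNgt; apply/negP => mj'.
have [i /andP[ij ij'] imax] := @arg_maxnP _ m [pred x | (x \in pblock P j) && (x < j)] val
  ltac:(by rewrite /= mj mj').
have samei : pblock P i = pblock P j by apply: same_pblock.
case/negP: (noarc i); rewrite is_arcE ij' samei pblock_self; apply/forall_inP => m' m'j.
apply/implyP => im'; rewrite leqNgt; apply/negP => m'j'.
by have := imax m'; rewrite /= m'j m'j' leqNgt im' => /(_ isT).
Qed.

Lemma is_max_in_block_ord_max : is_max_in_block P ord_max.
Proof. by rewrite is_max_in_blockE; apply/forall_inP => m _; rewrite -ltnS. Qed.

Lemma card_blocks_max : #|P| = #|[set i | is_max_in_block P i]|.
Proof.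
apply: card_partition_reps => [// | B BP | i j].
  have /set0Pn[x0 x0B] : B != set0 by case/and3P: partP => _ _; apply: contraNneq => <-.
  have [i iB imax] := @arg_maxnP _ x0 (mem B) val x0B.
  exists i; rewrite // is_max_in_blockE (def_pblock tIP BP iB).
  exact/forall_inP.
rewrite !is_max_in_blockE => /forall_inP maxi /forall_inP maxj ji.
have ij : i \in pblock P j by rewrite (same_pblock tIP ji) pblock_self.
by apply: val_inj; apply/eqP; rewrite eqn_leq maxj // maxi.
Qed.

Lemma card_blocks_min : #|P| = #|[set i | is_min_in_block P i]|.
Proof.
apply: card_partition_reps => [// | B BP | i j].
  have /set0Pn[x0 x0B] : B != set0 by case/and3P: partP => _ _; apply: contraNneq => <-.
  have [i iB imin] := @arg_minnP _ x0 (mem B) val x0B.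
  exists i; rewrite // is_min_in_blockE (def_pblock tIP BP iB).
  exact/forall_inP.
rewrite !is_min_in_blockE => /forall_inP mini /forall_inP minj ji.
have ij : i \in pblock P j by rewrite (same_pblock tIP ji) pblock_self.
by apply: val_inj; apply/eqP; rewrite eqn_leq mini // minj.
Qed.

End Blocks.

Section ChainPartition.
Variable n : nat.
Variable A : rel (pt n).
Hypothesis A_lt : forall x y, A x y -> (x < y)%N.
Hypothesis A_functional : forall x y y', A x y -> A x y' -> y = y'.
Hypothesis A_injective : forall x x' y, A x y -> A x' y -> x = x'.
Implicit Types x y : pt n.

Definition chain_next x := odflt x [pick y | A x y].
Definition chain_prev y := odflt y [pick x | A x y].

Lemma chain_nextP x : A x (chain_next x) \/ chain_next x = x /\ forall y, ~~ A x y.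
Proof.
by rewrite /chain_next; case: pickP => [y Axy | noA]; [left | right; split => // y; rewrite noA].
Qed.

Lemma chain_prevP y : A (chain_prev y) y \/ chain_prev y = y /\ forall x, ~~ A x y.
Proof.
by rewrite /chain_prev; case: pickP => [x Axy | noA]; [left | right; split => // x; rewrite noA].
Qed.

Lemma chain_next_eq x y : A x y -> chain_next x = y.
Proof.
move=> Axy; have [Anext|[_ /(_ y)]] := chain_nextP x; first exact: A_functional Anext Axy.
by rewrite Axy.
Qed.

Lemma chain_prev_eq x y : A x y -> chain_prev y = x.
Proof.
move=> Axy; have [Aprev|[_ /(_ x)]] := chain_prevP y; first exact: A_injective Aprev Axy.
by rewrite Axy.
Qed.

Lemma leq_iter_next c x : (x <= iter c chain_next x)%N.
Proof.
elim: c => //= c IHc; apply: leq_trans IHc _.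
by have [/A_lt/ltnW | [-> _]] := chain_nextP (iter c chain_next x).
Qed.

Lemma iter_next_fix c x : chain_next x = x -> iter c chain_next x = x.
Proof. by move=> fix_x; elim: c => //= c ->. Qed.

(* Each backward step along [A] decreases strictly, so #|pt n| = n.*2.+1
   steps reach the first element of the chain. *)
Definition chain_head y := iter n.*2.+1 chain_prev y.

Lemma chain_prev_head y : chain_prev (chain_head y) = chain_head y.
Proof.
have descend c : let z := iter c chain_prev y in chain_prev z = z \/ (z + c <= y)%N.
  elim: c => [|c IHc] /=; first by right; rewrite addn0.
  case: IHc => [fixc | le_zy]; first by left; rewrite !fixc.
  have [/A_lt | [fixc _]] := chain_prevP (iter c chain_prev y); first by right; lia.
  by left; rewrite !fixc.
by case: (descend n.*2.+1) => // /=; have := ltn_ord y; lia.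
Qed.

Lemma chain_head_prev y : chain_head (chain_prev y) = chain_head y.
Proof. by rewrite /chain_head -iterSr iterS chain_prev_head. Qed.

Lemma chain_head_next x : chain_head (chain_next x) = chain_head x.
Proof.
have [Anext | [-> _] //] := chain_nextP x.
by rewrite -chain_head_prev (chain_prev_eq Anext).
Qed.

Lemma chain_from_head y : exists c, y = iter c chain_next (chain_head y).
Proof.
suff climb s : exists c, y = iter c chain_next (iter s chain_prev y) by apply: climb.
elim: s => [|s [c IHc]]; first by exists 0.
rewrite iterS; have [Aprev | [-> _]] := chain_prevP (iter s chain_prev y).
  by exists c.+1; rewrite iterSr (chain_next_eq Aprev).
by exists c.
Qed.

Lemma chain_link x y :
  chain_head x = chain_head y -> (x <= y)%N -> exists c, y = iter c chain_next x.
Proof.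
move=> same_head le_xy.
have [a Ea] := chain_from_head x; have [b Eb] := chain_from_head y.
rewrite -same_head in Eb; set h := chain_head x in Ea Eb.
have [le_ab | lt_ba] := leqP a b.
  by exists (b - a); rewrite Eb {1}Ea -iterD subnK.
exists 0; apply/val_inj/eqP; rewrite eqn_leq le_xy /= Ea Eb.
by rewrite -(subnK (ltnW lt_ba)) iterD leq_iter_next.
Qed.

Definition chain_partition := preim_partition chain_head [set: pt n].

Lemma chain_partitionP : partition chain_partition [set: pt n].
Proof. exact: preim_partitionP. Qed.

Lemma pblock_chain_partition x y :
  (y \in pblock chain_partition x) = (chain_head x == chain_head y).
Proof.
rewrite pblock_equivalence_partition ?inE //.
by move=> ? ? ? _ _ _; split=> // /eqP->.
Qed.

Lemma is_arc_chain_partition i j : is_arc chain_partition i j = A i j.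
Proof.
rewrite (is_arcE chain_partitionP); apply/and3P/idP => [[lt_ij] | Aij].
  rewrite pblock_chain_partition => /eqP same_ij /forall_inP jmin.
  have [[|c] Ec] := chain_link same_ij (ltnW lt_ij); first by rewrite Ec ltnn in lt_ij.
  have [Anext | [fix_i _]] := chain_nextP i; last first.
    by rewrite Ec iterSr iter_next_fix ?fix_i ?ltnn in lt_ij.
  suff -> : j = chain_next i by [].
  apply/val_inj/eqP; rewrite eqn_leq Ec iterSr leq_iter_next andbT -iterSr -Ec.
  by apply: (implyP (jmin _ _) (A_lt Anext)); rewrite pblock_chain_partition chain_head_next.
split; first exact: A_lt Aij.
  by rewrite pblock_chain_partition -(chain_next_eq Aij) chain_head_next.
apply/forall_inP => m; rewrite pblock_chain_partition => /eqP same_im; apply/implyP => lt_im.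
have [[|c] Em] := chain_link same_im (ltnW lt_im); first by rewrite Em ltnn in lt_im.
by rewrite Em iterSr -(chain_next_eq Aij) leq_iter_next.
Qed.

End ChainPartition.

Section Symmetry.
Variable n : nat.
Implicit Types (P Q : {set {set pt n}}) (i j : pt n).

Lemma PiB_arc_rev P i j : PiB P -> is_arc P i j -> is_arc P (rev_ord j) (rev_ord i).
Proof.
case=> _ symP /symP[i' [j' [Ei' [Ej' arc']]]].
by rewrite -(rev_ord_of_zval Ei') -(rev_ord_of_zval Ej').
Qed.

Lemma PiB_of_arc_rev Q :
    is_setpart Q -> (forall i j, is_arc Q i j -> is_arc Q (rev_ord j) (rev_ord i)) ->
  PiB Q.
Proof.
move=> partQ revQ; split=> // i j; split=> [arc_ij | [i' [j' [Ei' [Ej' arc']]]]].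
  by exists (rev_ord j), (rev_ord i); rewrite !zval_rev; split; last split; last exact: revQ.
rewrite -(rev_ordK i) -(rev_ordK j); apply: revQ.
by rewrite -(rev_ord_of_zval Ei') -(rev_ord_of_zval Ej').
Qed.

Lemma PiB_min_rev P i : PiB P -> is_min_in_block P (rev_ord i) = is_max_in_block P i.
Proof.
move=> symP; have [partP _] := symP.
rewrite (is_min_in_blockNarc partP) (is_max_in_blockNarc partP); congr (~~ _).
apply/existsP/existsP => [[j /(PiB_arc_rev symP)] | [j /(PiB_arc_rev symP)]].
  by rewrite rev_ordK; exists (rev_ord j).
by exists (rev_ord j).
Qed.

End Symmetry.

Section PlusArcs.
Variable n : nat.
Variable P : {set {set pt n}}.
Hypothesis ncP : NCB P.
Implicit Types i j x y z : pt n.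

Let symP : PiB P. Proof. by case: ncP. Qed.
Let partP : partition P [set: pt n]. Proof. by case: symP. Qed.

Lemma plus_arcE i j : plus_arc P i j =
  (is_arc P i j && (j != i.+1 :> nat))
  || [&& j == i.+1 :> nat, is_max_in_block P i & is_min_in_block P j].
Proof. by rewrite /plus_arc zval_succ. Qed.

Lemma plus_arc_lt i j : plus_arc P i j -> (i < j)%N.
Proof.
rewrite plus_arcE => /orP[/andP[] | /and3P[/eqP-> _ _]] //.
by rewrite (is_arcE partP) => /and3P[].
Qed.

Lemma plus_arc_functional i j j' : plus_arc P i j -> plus_arc P i j' -> j = j'.
Proof.
have noarc_max k : is_max_in_block P i -> ~~ is_arc P i k.
  by rewrite (is_max_in_blockNarc partP) => /existsPn.
rewrite !plus_arcE => /orP[/andP[arc_j _] | /and3P[/eqP Ej max_i _]]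
                      /orP[/andP[arc_j' _] | /and3P[/eqP Ej' max_i' _]].
- exact: is_arc_functional arc_j arc_j'.
- by rewrite (negbTE (noarc_max j max_i')) in arc_j.
- by rewrite (negbTE (noarc_max j' max_i)) in arc_j'.
- by apply: val_inj; rewrite /= Ej Ej'.
Qed.

Lemma plus_arc_injective i i' j : plus_arc P i j -> plus_arc P i' j -> i = i'.
Proof.
have noarc_min k : is_min_in_block P j -> ~~ is_arc P k j.
  by rewrite (is_min_in_blockNarc partP) => /existsPn.
rewrite !plus_arcE => /orP[/andP[arc_i _] | /and3P[/eqP Ej _ min_j]]
                      /orP[/andP[arc_i' _] | /and3P[/eqP Ej' _ min_j']].
- exact: is_arc_injective arc_i arc_i'.
- by rewrite (negbTE (noarc_min i min_j')) in arc_i.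
- by rewrite (negbTE (noarc_min i' min_j)) in arc_i'.
- by apply: val_inj; apply: succn_inj; rewrite -Ej -Ej'.
Qed.

Lemma plus_arc_rev i j : plus_arc P i j -> plus_arc P (rev_ord j) (rev_ord i).
Proof.
have := ltn_ord i; have := ltn_ord j => lt_j lt_i.
rewrite !plus_arcE => /orP[/andP[arc_ij ne] | /and3P[Ej max_i min_j]].
  by rewrite PiB_arc_rev //=; apply/orP; left; move: ne; apply: contra => /eqP Ej; apply/eqP; lia.
rewrite -PiB_min_rev // rev_ordK PiB_min_rev // min_j max_i andbT.
by rewrite orbC /=; move: Ej => /eqP Ej; apply/eqP; lia.
Qed.

Lemma arc_pred_max y x z :
  is_arc P y x -> x = z.+1 :> nat -> y != z -> is_max_in_block P z.
Proof.
move=> arc_yx Ex ne_yz; have tIP : trivIset P by case/and3P: partP.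
move: (arc_yx); rewrite (is_arcE partP) => /and3P[lt_yx x_y /forall_inP xmin].
have lt_yz : (y < z)%N.
  by rewrite ltn_neqAle -ltnS -Ex lt_yx andbT; apply: contra ne_yz => /eqP/val_inj->.
have z_y : z \notin pblock P y.
  by apply/negP => /xmin/implyP/(_ lt_yz); rewrite Ex ltnn.
rewrite (is_max_in_blockNarc partP); apply/existsPn => s; apply/negP => arc_zs.
move: (arc_zs); rewrite (is_arcE partP) => /and3P[lt_zs s_z _].
have lt_xs : (x < s)%N.
  rewrite ltn_neqAle Ex lt_zs andbT -Ex; apply/negP => /eqP/val_inj Exs.
  by move: z_y; rewrite -(same_pblock tIP x_y) Exs (same_pblock tIP s_z) pblock_self.
have := proj2 ncP y z x s arc_yx arc_zs.
rewrite !zval_lt lt_yz lt_xs Ex ltnSn => /(_ isT isT isT) [_].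
by rewrite /zval Ex; lia.
Qed.

Lemma plus_arc_targetP x : [exists y, plus_arc P y x] =
  [exists z, [&& is_max_in_block P z, z != ord_max & x == ordS z]].
Proof.
apply/existsP/existsP => [[y] | [z /and3P[max_z ne_z /eqP Ex]]].
  rewrite plus_arcE => /orP[/andP[arc_yx ne] | /and3P[/eqP Ex max_y _]]; last first.
    have ne_y : y != ord_max by apply: contraTneq (ltn_ord x) => Ey; rewrite Ex Ey -leqNgt.
    by exists y; rewrite max_y ne_y; apply/eqP/ord_inj; rewrite ordS_val.
  have lt_yx : (y < x)%N by move: arc_yx; rewrite (is_arcE partP) => /and3P[].
  set z := ord_pred x; have Ex : x = ordS z by rewrite ord_predK.
  have ne_z : z != ord_max.
    by apply: contraTneq lt_yx => Ez; rewrite Ex Ez /= modnn.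
  exists z; rewrite ne_z -Ex eqxx !andbT; apply: arc_pred_max arc_yx _ _.
    by rewrite Ex ordS_val.
  by apply: contra ne => /eqP ->; rewrite Ex ordS_val.
have {}Ex : x = z.+1 :> nat by rewrite Ex ordS_val.
have [min_x | ] := boolP (is_min_in_block P x).
  by exists z; rewrite plus_arcE Ex eqxx max_z min_x orbT.
rewrite (is_min_in_blockNarc partP) negbK => /existsP[y arc_yx]; exists y.
rewrite plus_arcE arc_yx Ex /=; apply/orP; left; apply: contraTN max_z => /eqP/succn_inj Ezy.
rewrite (is_max_in_blockNarc partP) negbK; apply/existsP; exists x.
by rewrite (ord_inj Ezy).
Qed.

Lemma card_plus_targets : #|[set x | [exists y, plus_arc P y x]]|.+1 = #|P|.
Proof.
have -> : [set x | [exists y, plus_arc P y x]] =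
          @ordS _ @: ([set z | is_max_in_block P z] :\ ord_max).
  apply/setP => x; rewrite inE plus_arc_targetP.
  apply/existsP/imsetP => [[z /and3P[max_z ne_z /eqP ->]] | [z]].
    by exists z; rewrite // !inE ne_z.
  by rewrite !inE => /andP[ne_z max_z] ->; exists z; rewrite max_z ne_z eqxx.
rewrite card_imset; last exact: ordS_inj.
have max_top : ord_max \in [set z | is_max_in_block P z].
  by rewrite inE; apply: is_max_in_block_ord_max.
by rewrite (card_blocks_max partP) (cardsD1 ord_max [set z | _]) max_top.
Qed.

Section PlusPartition.
Variable Q : {set {set pt n}}.
Hypothesis partQ : is_setpart Q.
Hypothesis arcQ : forall i j, is_arc Q i j = plus_arc P i j.

Lemma NCB_plus_partition : NCB Q.
Proof.
split.
  by apply: PiB_of_arc_rev => // i j; rewrite !arcQ; apply: plus_arc_rev.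
move=> i j k l; rewrite !arcQ !plus_arcE => arc_ik arc_jl lt_ij lt_jk lt_kl.
move: (lt_ij) (lt_jk) (lt_kl); rewrite !zval_lt => lt_ij' lt_jk' lt_kl'.
case/orP: arc_ik => [/andP[arc_ik _] | /and3P[/eqP Ek _ _]]; last by lia.
case/orP: arc_jl => [/andP[arc_jl _] | /and3P[/eqP El _ _]]; last by lia.
exact: (proj2 ncP) arc_ik arc_jl lt_ij lt_jk lt_kl.
Qed.

Lemma card_plus_partition : #|Q| + #|P| = n.*2.+2.
Proof.
have -> : #|Q| = #|~: [set x | [exists y, plus_arc P y x]]|.
  rewrite (card_blocks_min partQ); apply: eq_card => x.
  rewrite !inE (is_min_in_blockNarc partQ); congr (~~ _).
  by apply: eq_existsb => y; rewrite arcQ.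
by rewrite -card_plus_targets addnS addnC cardsC card_ord.
Qed.

End PlusPartition.
End PlusArcs.

Theorem proposition5p1 (n k : nat) (P : {set {set pt n}}) :
  NCB P -> #|P| = k.*2.+1 ->
  exists Q : {set {set pt n}},
    is_setpart Q /\
    (forall i j : pt n, is_arc Q i j = plus_arc P i j) /\
    NCB Q /\ #|Q| = (n - k).*2.+1.
Proof.
move=> ncP cardP; pose Q := chain_partition (plus_arc P).
have arcQ : forall i j, is_arc Q i j = plus_arc P i j.
  apply: is_arc_chain_partition.
  - exact: plus_arc_lt.
  - exact: plus_arc_functional.
  - exact: plus_arc_injective.
have partQ : is_setpart Q by apply: chain_partitionP.
have ncQ := NCB_plus_partition ncP partQ arcQ.
have cardQ := card_plus_partition ncP partQ arcQ.
exists Q; do 3 split=> //.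
by move: cardQ; rewrite cardP; lia.
Qed.
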